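(* Let $d_1,d_2\ge 2$ and let $\rho$ be a separable state on $\mathbb{C}^{d_1}\otimes\mathbb{C}^{d_2}$, written in Bloch form \[ \rho=\frac{1}{d_1d_2}I_{d_1}\otimes I_{d_2}+\sum_{i=1}^{d_1^2-1}r_i\lambda_i^{(d_1)}\otimes I_{d_2}+\sum_{j=1}^{d_2^2-1}s_j I_{d_1}\otimes\lambda_j^{(d_2)}+\sum_{i=1}^{d_1^2-1}\sum_{j=1}^{d_2^2-1}T_{ij}\lambda_i^{(d_1)}\otimes\lambda_j^{(d_2)}. \] Let $a_k={\rm Tr}\big((TT^{\dagger})^{k/2}\big)$ and $b_k={\rm Tr}\big((\tilde T\tilde T^{\dagger})^{k/2}\big)$. Then \[ a_2^2\le \frac{\sqrt{(d_1^2-d_1)(d_2^2-d_2)}}{2d_1d_2}\,a_3, \qquad b_2^2\le \frac{\sqrt{(2+d_1^2-d_1)(2+d_2^2-d_2)}}{2d_1d_2}\,b_3 . \]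
   Context: For $d\ge2$, $\lambda_1^{(d)},\dots,\lambda_{d^2-1}^{(d)}$ are traceless Hermitian generators of $\mathfrak{su}(d)$ with ${\rm Tr}(\lambda_i^{(d)}\lambda_j^{(d)})=2\delta_{ij}$. The Bloch coefficients of a state $\rho$ on $\mathbb{C}^{d_1}\otimes\mathbb{C}^{d_2}$ are $r_i=\frac{1}{2d_2}{\rm Tr}(\rho\,\lambda_i^{(d_1)}\otimes I_{d_2})$, $s_j=\frac{1}{2d_1}{\rm Tr}(\rho\, I_{d_1}\otimes\lambda_j^{(d_2)})$, $T_{ij}=\frac14{\rm Tr}(\rho\,\lambda_i^{(d_1)}\otimes\lambda_j^{(d_2)})$. The correlation matrix is $T=(T_{ij})$, of size $(d_1^2-1)\times(d_2^2-1)$. With $\mathbf r=(r_1,\dots,r_{d_1^2-1})^t$ and $\mathbf s=(s_1,\dots,s_{d_2^2-1})^t$, the canonical correlation matrix is the $d_1^2\times d_2^2$ matrix $\tilde T=\begin{pmatrix}\frac{1}{d_1d_2}&\mathbf s^t\\ \mathbf r& T\end{pmatrix}$. A state is separable if it is a convex combination of product states $\rho_A\otimes\rho_B$. *)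

From mathcomp Require Import all_boot all_order all_algebra.
From mathcomp Require mxtens.
Set Implicit Arguments. Unset Strict Implicit. Unset Printing Implicit Defensive.
Import Order.TTheory GRing.Theory Num.Theory.
Local Open Scope ring_scope.

(* Complex scalars: an arbitrary numClosedFieldType C (e.g. the complex numbers). *)

Definition adjmx {C : numClosedFieldType} {m n : nat} (A : 'M[C]_(m, n)) : 'M[C]_(n, m) :=
  map_mx Num.conj A^T.

Definition kron {C : numClosedFieldType} {m n p q : nat}
  (A : 'M[C]_(m, n)) (B : 'M[C]_(p, q)) : 'M[C]_(m * p, n * q) :=
  mxtens.tensmx A B.

Definition hermitian {C : numClosedFieldType} {n : nat} (A : 'M[C]_n) : Prop :=
  adjmx A = A.

Definition psd {C : numClosedFieldType} {n : nat} (A : 'M[C]_n) : Prop :=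
  hermitian A /\ forall v : 'cV[C]_n, 0 <= (adjmx v *m A *m v) 0 0.

Definition density {C : numClosedFieldType} {n : nat} (A : 'M[C]_n) : Prop :=
  psd A /\ \tr A = 1.

Definition separable {C : numClosedFieldType} {d1 d2 : nat}
  (rho : 'M[C]_(d1 * d2)) : Prop :=
  exists (N : nat) (p : 'I_N -> C) (A : 'I_N -> 'M[C]_d1) (B : 'I_N -> 'M[C]_d2),
    [/\ forall k, 0 <= p k, \sum_k p k = 1,
        forall k, density (A k), forall k, density (B k) &
        rho = \sum_k p k *: kron (A k) (B k)].

Definition su_generators {C : numClosedFieldType} (d : nat)
  (lam : 'I_(d ^ 2 - 1) -> 'M[C]_d) : Prop :=
  [/\ forall i, hermitian (lam i), forall i, \tr (lam i) = 0 &
      forall i j, \tr (lam i *m lam j) = (i == j)%:R *+ 2].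

Definition bloch_r {C : numClosedFieldType} {d1 d2 : nat}
  (l1 : 'I_(d1 ^ 2 - 1) -> 'M[C]_d1) (rho : 'M[C]_(d1 * d2)) : 'cV[C]_(d1 ^ 2 - 1) :=
  \col_i ((2 * d2%:R)^-1 * \tr (rho *m kron (l1 i) (1%:M : 'M[C]_d2))).

Definition bloch_s {C : numClosedFieldType} {d1 d2 : nat}
  (l2 : 'I_(d2 ^ 2 - 1) -> 'M[C]_d2) (rho : 'M[C]_(d1 * d2)) : 'cV[C]_(d2 ^ 2 - 1) :=
  \col_j ((2 * d1%:R)^-1 * \tr (rho *m kron (1%:M : 'M[C]_d1) (l2 j))).

Definition corr_T {C : numClosedFieldType} {d1 d2 : nat}
  (l1 : 'I_(d1 ^ 2 - 1) -> 'M[C]_d1) (l2 : 'I_(d2 ^ 2 - 1) -> 'M[C]_d2)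
  (rho : 'M[C]_(d1 * d2)) : 'M[C]_(d1 ^ 2 - 1, d2 ^ 2 - 1) :=
  \matrix_(i, j) (4^-1 * \tr (rho *m kron (l1 i) (l2 j))).

Definition corr_Ttilde {C : numClosedFieldType} {d1 d2 : nat}
  (l1 : 'I_(d1 ^ 2 - 1) -> 'M[C]_d1) (l2 : 'I_(d2 ^ 2 - 1) -> 'M[C]_d2)
  (rho : 'M[C]_(d1 * d2)) : 'M[C]_(1 + (d1 ^ 2 - 1), 1 + (d2 ^ 2 - 1)) :=
  block_mx ((d1%:R * d2%:R)^-1)%:M (bloch_s l2 rho)^T
           (bloch_r l1 rho) (corr_T l1 l2 rho).

(* S is the (unique) positive semidefinite square root of the psd matrix M,
   i.e. S = M^(1/2); then (M)^(k/2) = S^k *)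
Definition psd_sqrt_of {C : numClosedFieldType} {n : nat} (M S : 'M[C]_n) : Prop :=
  psd S /\ S *m S = M.

From Pilot Require Import Defs.
From mathcomp Require Import all_boot all_order all_algebra.
From mathcomp Require Import spectral sesquilinear ring.
From mathcomp Require mxtens.
Set Implicit Arguments. Unset Strict Implicit. Unset Printing Implicit Defensive.
Import Order.TTheory GRing.Theory Num.Theory.
Local Open Scope ring_scope.
Local Open Scope sesquilinear_scope.

(* For a separable state rho = sum_k p_k A_k (x) B_k the correlation matrix is a
   convex combination T = sum_k p_k u_k^T v_k of outer products of local Bloch
   vectors.  Bessel's inequality for the Hilbert-Schmidt orthogonal generators,
   together with Tr(A^2) <= 1, bounds |u_k|^2 <= (1 - 1/d1)/2 and
   |v_k|^2 <= (1 - 1/d2)/2, so |u_k| |v_k| <= K, the constant of the theorem.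
   The trace norm Tr S of T is then at most K: if S' is a pseudo-inverse of S,
   X = T^dag S' is a partial isometry with Tr (T X) = Tr S, and by Cauchy-Schwarz
   each term |v_k X u_k^T| is at most |u_k| |v_k|.  In terms of the eigenvalues
   s_i >= 0 of S, a_2^2 = (sum s_i^2)^2 <= (sum s_i) (sum s_i^3) <= K a_3.
   The canonical correlation matrix is handled in the same way, with the extended
   vectors (1/d, u) in place of u. *)

Section Adjoint.
Variable C : numClosedFieldType.

Lemma adjmxE m n (A : 'M[C]_(m, n)) : adjmx A = A ^t*.
Proof. by []. Qed.

Lemma adjmxK m n (A : 'M[C]_(m, n)) : adjmx (adjmx A) = A.
Proof. exact: trmxCK. Qed.

Lemma adjmx_mul m n p (A : 'M[C]_(m, n)) (B : 'M[C]_(n, p)) :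
  adjmx (A *m B) = adjmx B *m adjmx A.
Proof. by rewrite /adjmx trmx_mul map_mxM. Qed.

Lemma adjmxD m n (A B : 'M[C]_(m, n)) : adjmx (A + B) = adjmx A + adjmx B.
Proof. by rewrite /adjmx linearD map_mxD. Qed.

Lemma adjmxN m n (A : 'M[C]_(m, n)) : adjmx (- A) = - adjmx A.
Proof. by rewrite /adjmx linearN map_mxN. Qed.

Lemma adjmxZ m n a (A : 'M[C]_(m, n)) : adjmx (a *: A) = a^* *: adjmx A.
Proof. by rewrite /adjmx linearZ map_mxZ. Qed.

Lemma adjmx_sum m n I (r : seq I) (P : pred I) (F : I -> 'M[C]_(m, n)) :
  adjmx (\sum_(i <- r | P i) F i) = \sum_(i <- r | P i) adjmx (F i).
Proof.
elim/big_rec2: _ => [|i x y _ <-]; last by rewrite adjmxD.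
by rewrite /adjmx trmx0 map_mx0.
Qed.

Lemma adjmx_scalar n a : adjmx (a%:M : 'M[C]_n) = a^*%:M.
Proof. by rewrite /adjmx tr_scalar_mx map_scalar_mx. Qed.

Lemma adjmx_diag n (s : 'rV[C]_n) : adjmx (diag_mx s) = diag_mx (map_mx Num.conj s).
Proof. by rewrite /adjmx tr_diag_mx map_diag_mx. Qed.

Lemma mxtrace_adjmx n (A : 'M[C]_n) : \tr (adjmx A) = (\tr A)^*.
Proof. by rewrite /mxtrace rmorph_sum; apply: eq_bigr => i _; rewrite !mxE. Qed.

Lemma mxtrace_mul_adjmx_ge0 m n (A : 'M[C]_(m, n)) : 0 <= \tr (A *m adjmx A).
Proof.
apply: sumr_ge0 => i _; rewrite mxE; apply: sumr_ge0 => j _.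
by rewrite !mxE mul_conjC_ge0.
Qed.

End Adjoint.

Section Spectral.
Variable C : numClosedFieldType.

Lemma mulmx_unitaryK m n (A : 'M[C]_(m, n)) (P : 'M[C]_n) :
  P \is unitarymx -> A *m P *m adjmx P = A.
Proof. exact: mulmxtVK. Qed.

Lemma mulmx_adj_unitaryK m n (A : 'M[C]_(m, n)) (P : 'M[C]_n) :
  P \is unitarymx -> A *m adjmx P *m P = A.
Proof. by move=> uP; rewrite mulmxKtV. Qed.

Lemma psd_spectral n (S : 'M[C]_n) : psd S ->
  exists2 P : 'M[C]_n, P \is unitarymx &
  exists2 s : 'rV[C]_n, (forall i, 0 <= s 0 i) & S = adjmx P *m diag_mx s *m P.
Proof.
case=> hS posS; have /orthomx_spectralP : S \is normalmx.
  by apply/normalmxP; rewrite -!adjmxE hS.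
have uP := spectral_unitarymx S; rewrite invmx_unitary // -adjmxE => eS.
exists (spectralmx S) => //; exists (spectral_diag S) => // i.
have := posS (adjmx (spectralmx S) *m delta_mx i 0).
rewrite adjmx_mul adjmxK {2}eS !mulmxA !mulmx_unitaryK //.
by rewrite adjmxE trmx_delta map_delta_mx -rowE -colE !mxE eqxx mulr1n.
Qed.

Lemma unitary_conj_mul n (P A B : 'M[C]_n) : P \is unitarymx ->
  (adjmx P *m A *m P) *m (adjmx P *m B *m P) = adjmx P *m (A *m B) *m P.
Proof. by move=> uP; rewrite !mulmxA mulmx_unitaryK. Qed.

Lemma unitary_conj_diag_exp n (P : 'M[C]_n) (s : 'rV[C]_n) k : P \is unitarymx ->
  (adjmx P *m diag_mx s *m P) ^+ k = adjmx P *m diag_mx (map_mx (fun x => x ^+ k) s) *m P.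
Proof.
move=> uP; elim: k => [|k IHk].
  rewrite (_ : diag_mx _ = 1%:M); last by apply/matrixP => i j; rewrite !mxE.
  by rewrite mulmx1 -[adjmx P]mul1mx mulmx_adj_unitaryK.
rewrite exprS IHk -mulmxE unitary_conj_mul // mulmx_diag.
by congr (_ *m diag_mx _ *m _); apply/rowP => i; rewrite !mxE exprS.
Qed.

Lemma mxtrace_unitary_conj n (P A : 'M[C]_n) : P \is unitarymx ->
  \tr (adjmx P *m A *m P) = \tr A.
Proof. by move=> uP; rewrite mxtrace_mulC mulmxA (unitarymxP uP) mul1mx. Qed.

Lemma psd_mxtrace_exp n (S : 'M[C]_n) : psd S ->
  exists2 s : 'I_n -> C, (forall i, 0 <= s i) & forall k, \tr (S ^+ k) = \sum_i s i ^+ k.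
Proof.
move=> /psd_spectral [P uP [s s_ge0 ->]]; exists (fun i => s 0 i) => // k.
rewrite unitary_conj_diag_exp // mxtrace_unitary_conj // mxtrace_diag.
by apply: eq_bigr => i _; rewrite mxE.
Qed.

(* Since 0^-1 = 0, inverting the eigenvalues gives the Moore-Penrose inverse. *)
Lemma psd_pseudo_inverse n (S : 'M[C]_n) : psd S ->
  exists S' : 'M[C]_n, [/\ adjmx S' = S', S *m S' = S' *m S,
                          S *m S' *m S = S & S' *m S *m S' = S'].
Proof.
move=> /psd_spectral [P uP [s s_ge0 ->]].
exists (adjmx P *m diag_mx (map_mx (fun x => x^-1) s) *m P); rewrite !unitary_conj_mul //.
rewrite !mulmx_diag; split.
- rewrite !adjmx_mul adjmxK adjmx_diag mulmxA; congr (_ *m _ *m _); congr diag_mx.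
  by apply/rowP => i; rewrite !mxE fmorphV; congr (_^-1); apply/CrealP; rewrite ger0_real.
- by congr (_ *m _ *m _); congr diag_mx; apply/rowP => i; rewrite !mxE mulrC.
- congr (_ *m _ *m _); congr diag_mx; apply/rowP => i; rewrite !mxE.
  by have [->|s0] := eqVneq (s 0 i) 0; rewrite ?mul0r // divfK.
- congr (_ *m _ *m _); congr diag_mx; apply/rowP => i; rewrite !mxE.
  by have [->|s0] := eqVneq (s 0 i) 0; rewrite ?invr0 ?mulr0 // mulVf ?mul1r.
Qed.

End Spectral.

Lemma power_sums_sqr_le (R : numDomainType) (I : finType) (s : I -> R) :
  (forall i, 0 <= s i) ->
  (\sum_i s i ^+ 2) ^+ 2 <= (\sum_i s i) * (\sum_i s i ^+ 3).
Proof.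
move=> s_ge0; rewrite -subr_ge0 -(pmulrn_lge0 _ (isT : (0 < 2)%N)).
pose f i j := s i * s j ^+ 3 - s i ^+ 2 * s j ^+ 2.
have -> : (\sum_i s i) * (\sum_i s i ^+ 3) - (\sum_i s i ^+ 2) ^+ 2
          = \sum_i \sum_j f i j.
  rewrite expr2 !big_distrlr -sumrB; apply: eq_bigr => i _.
  by rewrite -sumrB; apply: eq_bigr => j _; rewrite /f.
have -> : (\sum_i \sum_j f i j) *+ 2 = \sum_i \sum_j s i * s j * (s i - s j) ^+ 2.
  rewrite mulr2n [X in _ + X]exchange_big -big_split /=; apply: eq_bigr => i _.
  by rewrite -big_split; apply: eq_bigr => j _; rewrite /f /=; ring.
apply: sumr_ge0 => i _; apply: sumr_ge0 => j _.
apply: mulr_ge0; first exact: mulr_ge0.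
by rewrite -realEsqr rpredB // ger0_real.
Qed.

Section TraceInequalities.
Variable C : numClosedFieldType.

Lemma psd_mxtrace_sqr_le n (S : 'M[C]_n) : psd S ->
  \tr (S ^+ 2) ^+ 2 <= \tr S * \tr (S ^+ 3).
Proof.
move=> /psd_mxtrace_exp [s s_ge0 trS].
have -> : \tr S = \sum_i s i by rewrite -[S]expr1 trS; under eq_bigr do rewrite expr1.
by rewrite !trS power_sums_sqr_le.
Qed.

Lemma psd_mxtrace_ge0 n k (S : 'M[C]_n) : psd S -> 0 <= \tr (S ^+ k).
Proof.
by move=> /psd_mxtrace_exp [s s_ge0 ->]; apply: sumr_ge0 => i _; rewrite exprn_ge0.
Qed.

Lemma density_mxtrace_sqr_le1 n (A : 'M[C]_n) : density A -> \tr (A *m A) <= 1.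
Proof.
case=> /psd_mxtrace_exp [s s_ge0 trA] tr1.
have sum1 : \sum_i s i = 1.
  by rewrite -tr1 -[A]expr1 trA; apply: eq_bigr => i _; rewrite expr1.
rewrite mulmxE -expr2 trA -[1]mulr1 -{1 2}sum1 big_distrl /=.
apply: ler_sum => i _; rewrite expr2 ler_wpM2l //.
by rewrite (bigD1 i) //= lerDl sumr_ge0.
Qed.

Lemma partial_isometry_dnorm_le n m (V : 'M[C]_(n, m)) (x : 'rV[C]_n) :
  V *m adjmx V *m V = V -> dotmx (x *m V) (x *m V) <= dotmx x x.
Proof.
(* Q := V V^dag is an orthogonal projection, and '[x] - '[x V] = '[x (1 - Q)]. *)
move=> VV; set Q := V *m adjmx V.
have adjQ : adjmx Q = Q by rewrite /Q adjmx_mul adjmxK.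
have idQ : (1%:M - Q) *m (1%:M - Q) = 1%:M - Q.
  by rewrite mulmxBl mul1mx mulmxBr mulmx1 /Q mulmxA VV subrr subr0.
rewrite -subr_ge0 (_ : _ - _ = dotmx (x *m (1%:M - Q)) (x *m (1%:M - Q))) ?dnorm_ge0 //.
rewrite !dotmxE -!adjmxE !adjmx_mul adjmxD adjmxN adjmx_scalar conjC1 adjQ !mulmxA.
rewrite -[x *m (1%:M - Q) *m _]mulmxA idQ mulmxBr mulmx1 mulmxBl -(mulmxA x V) -/Q.
by rewrite [RHS]mxE [X in _ = _ + X]mxE.
Qed.

Lemma partial_isometry_form_le n m (V : 'M[C]_(n, m)) (y : 'rV[C]_n) (x : 'rV[C]_m) :
  V *m adjmx V *m V = V ->
  `|(y *m V *m x^T) 0 0| ^+ 2 <= dotmx y y * dotmx x x.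
Proof.
move=> VV; have dot_conj : dotmx (map_mx Num.conj x) (map_mx Num.conj x) = dotmx x x.
  by rewrite !dotmxE !mxE; apply: eq_bigr => j _; rewrite !mxE conjCK mulrC.
have -> : (y *m V *m x^T) 0 0 = dotmx (y *m V) (map_mx Num.conj x).
  by rewrite dotmxE map_trmx map_mxCK.
apply: (@le_trans _ _ (dotmx (y *m V) (y *m V) * dotmx x x)).
  by rewrite -dot_conj; exact: (CauchySchwarz (@dotmx C m) _ _).1.
by rewrite ler_wpM2r ?dnorm_ge0 ?partial_isometry_dnorm_le.
Qed.

End TraceInequalities.

Section TraceNorm.
Variable C : numClosedFieldType.

Lemma psd_sqrt_trace_dual m n (M : 'M[C]_(m, n)) (S : 'M[C]_m) :
  psd S -> S *m S = M *m adjmx M ->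
  exists2 X : 'M[C]_(n, m), X *m adjmx X *m X = X & \tr (M *m X) = \tr S.
Proof.
move=> /psd_pseudo_inverse [S' [adjS' SS'C SS'S S'SS']] SS.
exists (adjmx M *m S').
  rewrite adjmx_mul adjmxK adjS' -!mulmxA (mulmxA M) -SS; congr (_ *m _).
  by rewrite !mulmxA -(mulmxA S' S') -SS'C mulmxA !S'SS'.
by rewrite mulmxA -SS -mulmxA SS'C mulmxA SS'S.
Qed.

Lemma convex_outer_trace_norm_le m n N (p : 'I_N -> C)
    (u : 'I_N -> 'rV[C]_m) (v : 'I_N -> 'rV[C]_n) (K : C)
    (M : 'M[C]_(m, n)) (S : 'M[C]_m) :
  (forall k, 0 <= p k) -> \sum_k p k = 1 -> 0 <= K ->
  (forall k, dotmx (u k) (u k) * dotmx (v k) (v k) <= K ^+ 2) ->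
  M = \sum_k p k *: ((u k)^T *m v k) ->
  psd S -> S *m S = M *m adjmx M -> \tr S <= K.
Proof.
move=> p_ge0 p1 K_ge0 uvK eM psdS SS.
have [X isoX trMX] := psd_sqrt_trace_dual psdS SS.
have term_le k : `|\tr ((u k)^T *m v k *m X)| <= K.
  rewrite -mulmxA mxtrace_mulC trace_mx11 -(@ler_sqr _ _ K) ?nnegrE //.
  by apply: le_trans (partial_isometry_form_le _ _ isoX) _; rewrite mulrC.
have trS_ge0 : 0 <= \tr S by rewrite -[S]expr1 psd_mxtrace_ge0.
rewrite -(ger0_norm trS_ge0) -trMX eM mulmx_suml linear_sum /=.
apply: le_trans (ler_norm_sum _ _ _) _.
rewrite -[K]mul1r -p1 mulr_suml; apply: ler_sum => k _.
by rewrite -scalemxAl mxtraceZ normrM ger0_norm // ler_wpM2l.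
Qed.

Lemma convex_outer_mxtrace_sqr_le m n N (p : 'I_N -> C)
    (u : 'I_N -> 'rV[C]_m) (v : 'I_N -> 'rV[C]_n) (K : C)
    (M : 'M[C]_(m, n)) (S : 'M[C]_m) :
  (forall k, 0 <= p k) -> \sum_k p k = 1 -> 0 <= K ->
  (forall k, dotmx (u k) (u k) * dotmx (v k) (v k) <= K ^+ 2) ->
  M = \sum_k p k *: ((u k)^T *m v k) ->
  psd_sqrt_of (M *m adjmx M) S ->
  \tr (M *m adjmx M) ^+ 2 <= K * \tr (S ^+ 3).
Proof.
move=> p_ge0 p1 K_ge0 uvK eM [psdS SS].
rewrite -SS mulmxE -expr2; apply: le_trans (psd_mxtrace_sqr_le psdS) _.
rewrite ler_wpM2r ?psd_mxtrace_ge0 //.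
exact: convex_outer_trace_norm_le p_ge0 p1 K_ge0 uvK eM psdS SS.
Qed.

End TraceNorm.

Section Bloch.
Variable C : numClosedFieldType.

Lemma mxtrace_kron m n (A : 'M[C]_m) (B : 'M[C]_n) : \tr (kron A B) = \tr A * \tr B.
Proof. by rewrite /mxtrace mxtens.mulr_sum; apply: eq_bigr => k _; rewrite mxE. Qed.

Lemma mxtrace_convex_kron_mul d1 d2 N (p : 'I_N -> C)
    (A : 'I_N -> 'M[C]_d1) (B : 'I_N -> 'M[C]_d2) (X : 'M[C]_d1) (Y : 'M[C]_d2) :
  \tr ((\sum_k p k *: kron (A k) (B k)) *m kron X Y) =
  \sum_k p k * (\tr (A k *m X) * \tr (B k *m Y)).
Proof.
rewrite mulmx_suml linear_sum /=; apply: eq_bigr => k _.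
by rewrite -scalemxAl mxtraceZ /kron mxtens.tensmx_mul -/(kron _ _) mxtrace_kron.
Qed.

Lemma mxtrace_hermitian_mul_real n (A B : 'M[C]_n) :
  Defs.hermitian A -> Defs.hermitian B -> \tr (A *m B) \is Num.real.
Proof.
by move=> hA hB; apply/CrealP; rewrite -mxtrace_adjmx adjmx_mul hA hB mxtrace_mulC.
Qed.

Lemma hilbert_schmidt_bessel d k (l : 'I_k -> 'M[C]_d) (X : 'M[C]_d) :
  (forall i, Defs.hermitian (l i)) -> (forall i j, \tr (l i *m l j) = (i == j)%:R *+ 2) ->
  Defs.hermitian X -> \sum_i \tr (X *m l i) ^+ 2 / 2 <= \tr (X *m X).
Proof.
move=> herm_l orth_l hX; pose c i := \tr (X *m l i).
have c_real i : c i \is Num.real by exact: mxtrace_hermitian_mul_real.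
pose L : 'M[C]_d := \sum_i (c i / 2) *: l i.
have hL : Defs.hermitian L.
  rewrite /Defs.hermitian /L adjmx_sum; apply: eq_bigr => i _.
  by rewrite adjmxZ herm_l conj_Creal // rpred_div ?realn.
have trXL : \tr (X *m L) = \sum_i c i ^+ 2 / 2.
  rewrite /L mulmx_sumr linear_sum /=; apply: eq_bigr => i _.
  by rewrite -scalemxAr mxtraceZ mulrAC -expr2.
have trLL : \tr (L *m L) = \sum_i c i ^+ 2 / 2.
  rewrite {1}/L mulmx_suml linear_sum /=; apply: eq_bigr => i _.
  rewrite -scalemxAl mxtraceZ /L mulmx_sumr linear_sum (bigD1 i) //= big1 => [|j ji].
    by rewrite addr0 -scalemxAr mxtraceZ orth_l eqxx mulr1n; field.
  by rewrite -scalemxAr mxtraceZ orth_l eq_sym (negPf ji) mul0rn mulr0.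
have := mxtrace_mul_adjmx_ge0 (X - L); rewrite adjmxD adjmxN hX hL.
rewrite mulmxBl !mulmxBr !linearB /= [\tr (L *m X)]mxtrace_mulC trXL trLL.
by rewrite subrr subr0 subr_ge0.
Qed.

Definition bloch_vector d k (l : 'I_k -> 'M[C]_d) (A : 'M[C]_d) : 'rV[C]_k :=
  \row_i (\tr (A *m l i) / 2).

Lemma bloch_vector_dnorm_le d (l : 'I_(d ^ 2 - 1) -> 'M[C]_d) (A : 'M[C]_d) :
  (0 < d)%N -> su_generators l -> density A ->
  dotmx (bloch_vector l A) (bloch_vector l A) <= (1 - d%:R^-1) / 2.
Proof.
move=> d_gt0 [herm_l tr0_l orth_l] dA; have [[hA _] trA] := dA.
have d_neq0 : d%:R != 0 :> C by rewrite pnatr_eq0 -lt0n.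
have d_real : d%:R^-1 \is @Num.real C by rewrite rpredV realn.
pose X := A - (d%:R^-1)%:M.
have hX : Defs.hermitian X.
  by rewrite /Defs.hermitian adjmxD adjmxN adjmx_scalar hA conj_Creal.
have trXl i : \tr (X *m l i) = \tr (A *m l i).
  by rewrite mulmxBl linearB /= mul_scalar_mx mxtraceZ tr0_l mulr0 subr0.
have trXX : \tr (X *m X) = \tr (A *m A) - d%:R^-1.
  rewrite mulmxBl !mulmxBr !mul_scalar_mx mul_mx_scalar !linearB /= !mxtraceZ.
  by rewrite mxtrace_scalar trA; field.
have -> : dotmx (bloch_vector l A) (bloch_vector l A) = (\sum_i \tr (A *m l i) ^+ 2 / 2) / 2.
  rewrite dotmxE mxE mulr_suml; apply: eq_bigr => i _; rewrite !mxE conj_Creal.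
    by field.
  by rewrite rpred_div ?realn ?mxtrace_hermitian_mul_real.
rewrite ler_wpM2r ?invr_ge0 ?ler0n //.
have := hilbert_schmidt_bessel herm_l orth_l hX; rewrite trXX.
under eq_bigr do rewrite trXl.
move/le_trans; apply; rewrite lerD2r; exact: density_mxtrace_sqr_le1.
Qed.

Lemma outer_mxE m n (u : 'rV[C]_m) (v : 'rV[C]_n) i j : (u^T *m v) i j = u 0 i * v 0 j.
Proof. by rewrite !mxE big_ord1 !mxE. Qed.

Definition ext_bloch_vector d k (l : 'I_k -> 'M[C]_d) (A : 'M[C]_d) : 'rV[C]_(1 + k) :=
  row_mx (const_mx d%:R^-1) (bloch_vector l A).

Lemma dotmx_ext_bloch_vector d k (l : 'I_k -> 'M[C]_d) (A : 'M[C]_d) :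
  dotmx (ext_bloch_vector l A) (ext_bloch_vector l A) =
  d%:R^-2 + dotmx (bloch_vector l A) (bloch_vector l A).
Proof.
rewrite !dotmxE tr_row_mx map_col_mx mul_row_col mxE; congr (_ + _).
by rewrite !mxE big_ord1 !mxE conj_Creal ?rpredV ?realn // -exprVn.
Qed.

Lemma corr_T_convex_kron d1 d2 (l1 : 'I_(d1 ^ 2 - 1) -> 'M[C]_d1)
    (l2 : 'I_(d2 ^ 2 - 1) -> 'M[C]_d2) N (p : 'I_N -> C)
    (A : 'I_N -> 'M[C]_d1) (B : 'I_N -> 'M[C]_d2) :
  corr_T l1 l2 (\sum_k p k *: kron (A k) (B k)) =
  \sum_k p k *: ((bloch_vector l1 (A k))^T *m bloch_vector l2 (B k)).
Proof.
apply/matrixP => i j; rewrite mxE summxE mxtrace_convex_kron_mul mulr_sumr.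
by apply: eq_bigr => k _; rewrite mxE outer_mxE !mxE; field.
Qed.

Lemma corr_Ttilde_convex_kron d1 d2 (l1 : 'I_(d1 ^ 2 - 1) -> 'M[C]_d1)
    (l2 : 'I_(d2 ^ 2 - 1) -> 'M[C]_d2) N (p : 'I_N -> C)
    (A : 'I_N -> 'M[C]_d1) (B : 'I_N -> 'M[C]_d2) :
  (0 < d1)%N -> (0 < d2)%N -> \sum_k p k = 1 ->
  (forall k, \tr (A k) = 1) -> (forall k, \tr (B k) = 1) ->
  corr_Ttilde l1 l2 (\sum_k p k *: kron (A k) (B k)) =
  \sum_k p k *: ((ext_bloch_vector l1 (A k))^T *m ext_bloch_vector l2 (B k)).
Proof.
move=> d1_gt0 d2_gt0 p1 trA trB.
have d1_neq0 : d1%:R != 0 :> C by rewrite pnatr_eq0 -lt0n.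
have d2_neq0 : d2%:R != 0 :> C by rewrite pnatr_eq0 -lt0n.
apply/matrixP => i j; rewrite summxE -[i]splitK -[j]splitK.
case: (split i) => i'; case: (split j) => j' /=.
- rewrite block_mxEul !mxE !ord1 eqxx mulr1n.
  under eq_bigr do rewrite mxE outer_mxE !row_mxEl !mxE.
  by rewrite -mulr_suml p1 mul1r invfM.
- rewrite block_mxEur !mxE mxtrace_convex_kron_mul mulr_sumr.
  apply: eq_bigr => k _; rewrite mxE outer_mxE row_mxEl row_mxEr !mxE.
  by rewrite mulmx1 trA; field.
- rewrite block_mxEdl !mxE mxtrace_convex_kron_mul mulr_sumr.
  apply: eq_bigr => k _; rewrite mxE outer_mxE row_mxEr row_mxEl !mxE.
  by rewrite mulmx1 trB; field.
- rewrite block_mxEdr corr_T_convex_kron summxE.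
  by apply: eq_bigr => k _; rewrite [LHS]mxE [RHS]mxE !outer_mxE !row_mxEr.
Qed.

End Bloch.

Lemma natr_sqr_sub (R : comNzRingType) d : (0 < d)%N ->
  d%:R ^+ 2 - d%:R = (d * d.-1)%:R :> R.
Proof. by case: d => // d _; rewrite natrM /= -addn1 natrD; ring. Qed.

Section SeparableBounds.
Variables (C : numClosedFieldType) (d1 d2 : nat).
Variables (l1 : 'I_(d1 ^ 2 - 1) -> 'M[C]_d1) (l2 : 'I_(d2 ^ 2 - 1) -> 'M[C]_d2).
Hypotheses (d1_gt0 : (0 < d1)%N) (d2_gt0 : (0 < d2)%N).
Hypotheses (l1P : su_generators l1) (l2P : su_generators l2).

Let d1_neq0 : d1%:R != 0 :> C. Proof. by rewrite pnatr_eq0 -lt0n. Qed.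
Let d2_neq0 : d2%:R != 0 :> C. Proof. by rewrite pnatr_eq0 -lt0n. Qed.

Lemma separable_corr_T_sqr_le (rho : 'M[C]_(d1 * d2)) (S : 'M[C]_(d1 ^ 2 - 1)) :
  separable rho ->
  psd_sqrt_of (corr_T l1 l2 rho *m adjmx (corr_T l1 l2 rho)) S ->
  (\tr (corr_T l1 l2 rho *m adjmx (corr_T l1 l2 rho))) ^+ 2
    <= sqrtC ((d1%:R ^+ 2 - d1%:R) * (d2%:R ^+ 2 - d2%:R)) / (2 * d1%:R * d2%:R)
       * \tr (S ^+ 3).
Proof.
move=> [N [p [A [B [p_ge0 p1 dA dB ->]]]]].
apply: convex_outer_mxtrace_sqr_le p_ge0 p1 _ _ (corr_T_convex_kron _ _ _ _ _).
  by rewrite divr_ge0 ?sqrtC_ge0 ?mulr_ge0 ?ler0n // !natr_sqr_sub ?mulr_ge0 ?ler0n.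
move=> k; rewrite expr_div_n sqrtCK.
have -> : (d1%:R ^+ 2 - d1%:R) * (d2%:R ^+ 2 - d2%:R) / (2 * d1%:R * d2%:R) ^+ 2
          = (1 - d1%:R^-1) / 2 * ((1 - d2%:R^-1) / 2) :> C.
  by field; rewrite d1_neq0 d2_neq0.
by apply: ler_pM; rewrite ?dnorm_ge0 ?bloch_vector_dnorm_le.
Qed.

Lemma separable_corr_Ttilde_sqr_le (rho : 'M[C]_(d1 * d2))
    (St : 'M[C]_(1 + (d1 ^ 2 - 1))) :
  separable rho ->
  psd_sqrt_of (corr_Ttilde l1 l2 rho *m adjmx (corr_Ttilde l1 l2 rho)) St ->
  (\tr (corr_Ttilde l1 l2 rho *m adjmx (corr_Ttilde l1 l2 rho))) ^+ 2
    <= sqrtC ((2 + d1%:R ^+ 2 - d1%:R) * (2 + d2%:R ^+ 2 - d2%:R)) / (2 * d1%:R * d2%:R)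
       * \tr (St ^+ 3).
Proof.
move=> [N [p [A [B [p_ge0 p1 dA dB ->]]]]].
have trA k : \tr (A k) = 1 by case: (dA k).
have trB k : \tr (B k) = 1 by case: (dB k).
apply: convex_outer_mxtrace_sqr_le p_ge0 p1 _ _
  (corr_Ttilde_convex_kron _ _ d1_gt0 d2_gt0 p1 trA trB).
  rewrite divr_ge0 ?mulr_ge0 ?ler0n // sqrtC_ge0 -!addrA !natr_sqr_sub //.
  by rewrite mulr_ge0 // !addr_ge0 ?ler01 ?ler0n.
move=> k; rewrite !dotmx_ext_bloch_vector expr_div_n sqrtCK.
have -> : (2 + d1%:R ^+ 2 - d1%:R) * (2 + d2%:R ^+ 2 - d2%:R) / (2 * d1%:R * d2%:R) ^+ 2
          = (d1%:R^-2 + (1 - d1%:R^-1) / 2) * (d2%:R^-2 + (1 - d2%:R^-1) / 2) :> C.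
  by field; rewrite d1_neq0 d2_neq0.
apply: ler_pM; rewrite ?addr_ge0 ?dnorm_ge0 ?invr_ge0 ?exprn_ge0 ?ler0n ?lerD2l //.
- exact: bloch_vector_dnorm_le.
- exact: bloch_vector_dnorm_le.
Qed.

End SeparableBounds.

Theorem theorem1 (C : numClosedFieldType) (d1 d2 : nat)
  (l1 : 'I_(d1 ^ 2 - 1) -> 'M[C]_d1) (l2 : 'I_(d2 ^ 2 - 1) -> 'M[C]_d2)
  (rho : 'M[C]_(d1 * d2))
  (S : 'M[C]_(d1 ^ 2 - 1)) (St : 'M[C]_(1 + (d1 ^ 2 - 1))) :
  (2 <= d1)%N -> (2 <= d2)%N ->
  su_generators l1 -> su_generators l2 ->
  density rho -> separable rho ->
  psd_sqrt_of (corr_T l1 l2 rho *m adjmx (corr_T l1 l2 rho)) S ->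
  psd_sqrt_of (corr_Ttilde l1 l2 rho *m adjmx (corr_Ttilde l1 l2 rho)) St ->
  (\tr (corr_T l1 l2 rho *m adjmx (corr_T l1 l2 rho))) ^+ 2
    <= sqrtC ((d1%:R ^+ 2 - d1%:R) * (d2%:R ^+ 2 - d2%:R)) / (2 * d1%:R * d2%:R)
       * \tr (S ^+ 3)
  /\
  (\tr (corr_Ttilde l1 l2 rho *m adjmx (corr_Ttilde l1 l2 rho))) ^+ 2
    <= sqrtC ((2 + d1%:R ^+ 2 - d1%:R) * (2 + d2%:R ^+ 2 - d2%:R)) / (2 * d1%:R * d2%:R)
       * \tr (St ^+ 3).
Proof.
(* density rho is implied by separable rho. *)
move=> d1_ge2 d2_ge2 l1P l2P _ sep_rho sqrtT sqrtTt.
have d1_gt0 : (0 < d1)%N by apply: ltnW.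
have d2_gt0 : (0 < d2)%N by apply: ltnW.
split; first exact: separable_corr_T_sqr_le.
exact: separable_corr_Ttilde_sqr_le.
Qed.
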